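(* Let $M,N\in\mathbb{S}^{q+r}$. If there exists a real $\alpha\ge 0$ such that $M-\alpha N\ge 0$, then $\mathcal{Z}_r(N)\subseteq\mathcal{Z}_r(M)$. Moreover, if $N\in\boldsymbol{\Pi}_{q,r}$ and $N$ has at least one positive eigenvalue, then $\mathcal{Z}_r(N)\subseteq\mathcal{Z}_r(M)$ if and only if there exists a real $\alpha\ge 0$ such that $M-\alpha N\ge 0$.
   Context: $\mathbb{S}^k$ denotes the real symmetric $k\times k$ matrices; for symmetric matrices, $A\ge 0$ means positive semidefinite. $A^\dagger$ is the Moore–Penrose pseudo-inverse. Any $N\in\mathbb{S}^{q+r}$ is partitioned as $N=\begin{bmatrix}N_{11}&N_{12}\\ N_{21}&N_{22}\end{bmatrix}$ with $N_{11}\in\mathbb{S}^q$, $N_{22}\in\mathbb{S}^r$. The generalized Schur complement is $N\mid N_{22}:=N_{11}-N_{12}N_{22}^\dagger N_{21}$. The set $\boldsymbol{\Pi}_{q,r}$ consists of all $N\in\mathbb{S}^{q+r}$ with $N_{22}\le 0$, $N\mid N_{22}\ge 0$ and $\ker N_{22}\subseteq\ker N_{12}$. Define $\mathcal{Z}_r(\Pi)=\{Z\in\mathbb{R}^{r\times q}:\begin{bmatrix}I_q\\ Z\end{bmatrix}^\top\Pi\begin{bmatrix}I_q\\ Z\end{bmatrix}\ge 0\}$. *)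

From HB Require Import structures.
From mathcomp Require Import all_boot all_order all_algebra.
From mathcomp Require Import boolp classical_sets reals.
Set Implicit Arguments. Unset Strict Implicit. Unset Printing Implicit Defensive.
Import Order.TTheory GRing.Theory Num.Theory.
Local Open Scope ring_scope.

Definition sym_mx (R : realType) (n : nat) (A : 'M[R]_n) : Prop := A^T = A.

(* Positive semidefinite: the quadratic form is nonnegative
   (used only on symmetric matrices, as in the paper). *)
Definition psd_mx (R : realType) (n : nat) (A : 'M[R]_n) : Prop :=
  forall v : 'cV[R]_n, 0 <= (v^T *m A *m v) ord0 ord0.

Definition is_MP_pinv (R : realType) (m n : nat) (A : 'M[R]_(m, n))
  (X : 'M[R]_(n, m)) : Prop :=
  [/\ A *m X *m A = A, X *m A *m X = X,
      (A *m X)^T = A *m X & (X *m A)^T = X *m A].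

(* The Moore-Penrose pseudo-inverse (exists and is unique; chosen via xget). *)
Definition mp_pinv (R : realType) (m n : nat) (A : 'M[R]_(m, n)) : 'M[R]_(n, m) :=
  xget 0 (is_MP_pinv A).

Definition gschur (R : realType) (q r : nat) (N : 'M[R]_(q + r)) : 'M[R]_q :=
  ulsubmx N - ursubmx N *m mp_pinv (drsubmx N) *m dlsubmx N.

Definition Pi_set (R : realType) (q r : nat) (N : 'M[R]_(q + r)) : Prop :=
  [/\ sym_mx N,
      psd_mx (- drsubmx N),
      psd_mx (gschur N) &
      forall v : 'cV[R]_r, drsubmx N *m v = 0 -> ursubmx N *m v = 0].

Definition Zset (R : realType) (q r : nat) (P : 'M[R]_(q + r)) (Z : 'M[R]_(r, q))
  : Prop :=
  psd_mx ((col_mx 1%:M Z)^T *m P *m col_mx 1%:M Z).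

From HB Require Import structures.
From mathcomp Require Import all_boot all_order all_algebra.
From mathcomp Require Import boolp classical_sets reals.
From mathcomp Require Import ring lra.
Import Order.TTheory GRing.Theory Num.Theory.
Local Open Scope ring_scope.

Set Implicit Arguments. Unset Strict Implicit. Unset Printing Implicit Defensive.

(* The easy direction is a pointwise inequality of quadratic forms.  For the
   converse, the S-lemma turns "[qform N v >= 0] implies [qform M v >= 0]" into
   a multiplier [alpha >= 0] as soon as [qform N] takes a positive value (here:
   a positive eigenvalue): [alpha] is the supremum of the ratios
   [qform M y / qform N y] over [qform N y < 0], which is bounded by every
   ratio over [qform N x > 0] because [qform M] is nonnegative at the two roots
   of [t |-> qform N (y + t x)].
   It remains to see that [Z_r(N)] sees the whole cone [qform N >= 0].  For
   [N] in Pi, completing the square with [K = - N22^+ N21] gives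
   [qform N (x, K x + y) = qform S x + qform N22 y] with [S = N | N22 >= 0]
   and [N22 <= 0].  A cone point [(x, K x + y)] then lies on the graph of some
   rank-one perturbation [K + y w] of [K] inside [Z_r(N)], except when [x = 0],
   where it is recovered as the leading coefficient of a quadratic in [t]
   along graph points [(e, K e + t y)]. *)

Section QuadraticForm.
Variable R : realType.

Definition bform n (A : 'M[R]_n) (x y : 'cV[R]_n) : R := (x^T *m A *m y) ord0 ord0.
Definition qform n (A : 'M[R]_n) (x : 'cV[R]_n) : R := bform A x x.

Lemma bformDl n (A : 'M[R]_n) x y z : bform A (x + y) z = bform A x z + bform A y z.
Proof. by rewrite /bform linearD /= !mulmxDl mxE. Qed.

Lemma bformDr n (A : 'M[R]_n) x y z : bform A z (x + y) = bform A z x + bform A z y.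
Proof. by rewrite /bform mulmxDr mxE. Qed.

Lemma bformZl n (A : 'M[R]_n) c x y : bform A (c *: x) y = c * bform A x y.
Proof. by rewrite /bform linearZ /= -!scalemxAl mxE. Qed.

Lemma bformZr n (A : 'M[R]_n) c x y : bform A x (c *: y) = c * bform A x y.
Proof. by rewrite /bform -scalemxAr mxE. Qed.

Lemma bform_tr n (A : 'M[R]_n) x y : bform A^T x y = bform A y x.
Proof.
by rewrite /bform -[in RHS](trmxK (y^T *m A *m x)) [in RHS]mxE !trmx_mul trmxK mulmxA.
Qed.

Lemma bformC n (A : 'M[R]_n) x y : A^T = A -> bform A x y = bform A y x.
Proof. by move=> symA; rewrite -bform_tr symA. Qed.

Lemma qformD n (A : 'M[R]_n) x y :
  qform A (x + y) = qform A x + qform A y + (bform A x y + bform A y x).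
Proof. rewrite /qform bformDl !bformDr; ring. Qed.

Lemma qformZ n (A : 'M[R]_n) c x : qform A (c *: x) = c ^+ 2 * qform A x.
Proof. by rewrite /qform bformZl bformZr mulrA expr2. Qed.

Lemma qform_lin n (A : 'M[R]_n) x y t :
  qform A (x + t *: y) = qform A x + t * (bform A x y + bform A y x) + t ^+ 2 * qform A y.
Proof. rewrite qformD qformZ bformZr bformZl; ring. Qed.

Lemma qformBmx n (A B : 'M[R]_n) x : qform (A - B) x = qform A x - qform B x.
Proof. by rewrite /qform /bform mulmxBr mulmxBl !mxE. Qed.

Lemma qformNmx n (A : 'M[R]_n) x : qform (- A) x = - qform A x.
Proof. by rewrite /qform /bform mulmxN mulNmx mxE. Qed.

Lemma qformZmx n (A : 'M[R]_n) c x : qform (c *: A) x = c * qform A x.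
Proof. by rewrite /qform /bform -scalemxAr -scalemxAl mxE. Qed.

Lemma qform_tr n (A : 'M[R]_n) x : qform A^T x = qform A x.
Proof. exact: bform_tr. Qed.

Lemma qform_mulmx m n (A : 'M[R]_m) (C : 'M[R]_(m, n)) u :
  qform (C^T *m A *m C) u = qform A (C *m u).
Proof. by rewrite /qform /bform trmx_mul !mulmxA. Qed.

Lemma qform_ker n (A : 'M[R]_n) x : A *m x = 0 -> qform A x = 0.
Proof. by move=> Ax0; rewrite /qform /bform -mulmxA Ax0 mulmx0 mxE. Qed.

Lemma qform_col0 q r (A : 'M[R]_(q + r)) b : qform A (col_mx 0 b) = qform (drsubmx A) b.
Proof.
rewrite -[in LHS](submxK A) /qform /bform tr_col_mx trmx0 mul_row_block.
by rewrite mul_row_col mulmx0 add0r (mul0mx _ (ursubmx A)) add0r.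
Qed.

Lemma cV_sqnorm_eq0 n (x : 'cV[R]_n) : (x^T *m x) ord0 ord0 = 0 -> x = 0.
Proof.
rewrite mxE => /eqP; rewrite psumr_eq0 => [/allP x0|j _]; last first.
  by rewrite !mxE -expr2 sqr_ge0.
apply/matrixP => i j; rewrite (ord1 j) !mxE.
by have /implyP/(_ isT) := x0 i (mem_index_enum i); rewrite !mxE -expr2 sqrf_eq0 => /eqP.
Qed.

Lemma cV_sqnorm_gt0 n (x : 'cV[R]_n) : x != 0 -> 0 < (x^T *m x) ord0 ord0.
Proof.
move=> x_neq0; rewrite lt_def; apply/andP; split.
  by apply: contraNneq x_neq0 => /cV_sqnorm_eq0 ->.
by rewrite mxE sumr_ge0 // => j _; rewrite !mxE -expr2 sqr_ge0.
Qed.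

End QuadraticForm.

Section QuadraticPolynomial.
Variable R : realType.

Lemma quadratic_ge0_lead_ge0 (a b c : R) :
  (forall t, 0 <= a + t * b + t ^+ 2 * c) -> 0 <= c.
Proof.
move=> quad_ge0; rewrite leNgt; apply/negP => c_lt0.
pose t := 1 + (`|a| + 1) / - c.
have t_ge1 : 1 <= t.
  by rewrite lerDl divr_ge0 ?addr_ge0 ?normr_ge0 // oppr_ge0 ltW.
have tc : t * c = c - (`|a| + 1).
  by rewrite /t; field; rewrite lt_eqF.
have a_ge0 := normr_ge0 a.
have t2c : t ^+ 2 * c <= t * c.
  have : 0 <= (t - 1) * - (t * c) by rewrite mulr_ge0 ?subr_ge0 // tc; lra.
  rewrite expr2; lra.
have := quad_ge0 t; have := quad_ge0 (- t); rewrite sqrrN mulNr.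
have := ler_norm a; lra.
Qed.

Lemma quadratic_ge0_lin_eq0 (b c : R) : (forall t, 0 <= t * b + t ^+ 2 * c) -> b = 0.
Proof.
move=> quad_ge0.
have c_ge0 : 0 <= c by apply: (@quadratic_ge0_lead_ge0 0 b) => t; rewrite add0r.
pose t := - b / (c + 1).
have tc : t * (c + 1) = - b by rewrite /t divfK // gt_eqF //; lra.
have : t * b + t ^+ 2 * c = - t ^+ 2.
  by rewrite -[b]opprK -tc; ring.
move: (quad_ge0 t) => /[swap] ->; rewrite oppr_ge0 => t2_le0.
have t0 : t = 0 by apply/eqP; rewrite -sqrf_eq0 eq_le t2_le0 sqr_ge0.
by move: tc; rewrite t0 mul0r => /esym/eqP; rewrite oppr_eq0 => /eqP.
Qed.

Lemma quadratic_root (a b c s : R) : a != 0 -> s ^+ 2 = b ^+ 2 - 4 * a * c ->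
  let t := (- b + s) / (2 * a) in c + t * b + t ^+ 2 * a = 0.
Proof.
move=> a_neq0 disc t.
have ta : t * (2 * a) = - b + s by rewrite /t divfK // mulf_neq0 // pnatr_eq0.
apply: (mulfI (_ : 4 * a != 0)); first by rewrite mulf_neq0 // pnatr_eq0.
have -> : 4 * a * (c + t * b + t ^+ 2 * a) =
           4 * a * c + 2 * (t * (2 * a)) * b + (t * (2 * a)) ^+ 2 by ring.
rewrite ta mulr0; nra.
Qed.

Lemma quadratic_roots_sign (a b c : R) : 0 < a -> c < 0 ->
  exists t1 t2, [/\ t1 < 0, 0 < t2, c + t1 * b + t1 ^+ 2 * a = 0 &
                    c + t2 * b + t2 ^+ 2 * a = 0].
Proof.
move=> a_gt0 c_lt0.
pose s := Num.sqrt (b ^+ 2 - 4 * a * c).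
have s2 : s ^+ 2 = b ^+ 2 - 4 * a * c by rewrite sqr_sqrtr //; nra.
have s_ge0 : 0 <= s := sqrtr_ge0 _.
have b2s2 : b ^+ 2 < s ^+ 2 by rewrite s2; nra.
have [bN bP] : - b < s /\ b < s by split; nra.
have a_neq0 : a != 0 by rewrite gt_eqF.
exists ((- b + - s) / (2 * a)), ((- b + s) / (2 * a)); split.
- by rewrite pmulr_llt0 ?invr_gt0 ?mulr_gt0 //; lra.
- by rewrite pmulr_lgt0 ?invr_gt0 ?mulr_gt0 //; lra.
- by apply: quadratic_root; rewrite // sqrrN.
- exact: quadratic_root.
Qed.

End QuadraticPolynomial.

Lemma psd_qform_eq0_ker (R : realType) n (A : 'M[R]_n) y :
  A^T = A -> psd_mx A -> qform A y = 0 -> A *m y = 0.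
Proof.
move=> symA psdA Ay0.
have bform_y0 z : bform A y z = 0.
  have : 2 * bform A y z = 0.
    apply: (@quadratic_ge0_lin_eq0 _ _ (qform A z)) => t.
    have : 0 <= qform A (y + t *: z) := psdA _.
    rewrite qform_lin Ay0 add0r.
    by rewrite (bformC z y symA) mulr_natl mulr2n.
  by move/eqP; rewrite mulf_eq0 pnatr_eq0 => /eqP.
apply: cV_sqnorm_eq0; have := bform_y0 (A *m y).
by rewrite /bform -{1}symA -trmx_mul.
Qed.

Section SLemma.
Variables (R : realType) (n : nat) (A B : 'M[R]_n).
Hypothesis implied : forall z, 0 <= qform B z -> 0 <= qform A z.

Lemma implied_qform_ratio_le x y : 0 < qform B x -> qform B y < 0 ->
  qform A x * qform B y <= qform A y * qform B x.
Proof.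
move=> Bx_gt0 By_lt0.
set bA := bform A y x + bform A x y; set bB := bform B y x + bform B x y.
have [t1 [t2 [t1_lt0 t2_gt0 root1 root2]]] := quadratic_roots_sign bB Bx_gt0 By_lt0.
(* At a root [t], the root equation cancels the [t^2] terms; the resulting
   affine function of [t] is nonnegative at [t1 < 0 < t2], hence at [0]. *)
have affine_ge0 t : qform B y + t * bB + t ^+ 2 * qform B x = 0 ->
    0 <= qform A y * qform B x - qform A x * qform B y
         + t * (bA * qform B x - qform A x * bB).
  move=> root; have := @implied (y + t *: x); rewrite !qform_lin -/bA -/bB root lexx.
  move=> /(_ isT) Ayx_ge0.
  have := mulr_ge0 Ayx_ge0 (ltW Bx_gt0).
  by rewrite -[X in _ <= X]subr0 -(mulr0 (qform A x)) -root; lra.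
have := affine_ge0 _ root1; have := affine_ge0 _ root2; nra.
Qed.

Lemma S_lemma xb : 0 < qform B xb -> exists alpha, 0 <= alpha /\ psd_mx (A - alpha *: B).
Proof.
move=> Bxb_gt0.
pose E : set R := fun w => w = 0 \/ exists2 y, qform B y < 0 & w = qform A y / qform B y.
have ratio_ub x : 0 < qform B x -> ubound E (qform A x / qform B x).
  move=> Bx_gt0 w [->|[y By_lt0 ->]]; first by rewrite divr_ge0 ?implied ?ltW.
  by rewrite ler_pdivlMr // mulrAC ler_ndivrMr //; apply: implied_qform_ratio_le.
have E_sup : has_sup E.
  by split; [exists 0; left | exists (qform A xb / qform B xb); apply: ratio_ub].
exists (sup E); split; first by apply: sup_upper_bound => //; left.
move=> z; change (0 <= qform (A - sup E *: B) z); rewrite qformBmx qformZmx subr_ge0.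
have [Bz_lt0|Bz_gt0|Bz0] := ltgtP (qform B z) 0.
- by rewrite -ler_ndivrMr //; apply: sup_upper_bound => //; right; exists z.
- by rewrite -ler_pdivlMr //; apply: ge_sup; [exists 0; left | exact: ratio_ub Bz_gt0].
- by rewrite Bz0 mulr0 implied // Bz0.
Qed.

End SLemma.

Section PseudoInverse.
Variable R : realType.

Lemma gram_unitmx k p (B : 'M[R]_(p, k)) : row_free B^T -> B^T *m B \in unitmx.
Proof.
move=> freeBT; rewrite unitmxE unitfE; apply/negP => /det0P [v v_neq0 vG0].
suff vBT0 : v *m B^T = 0.
  by move/eqP: v_neq0; apply; apply: (row_free_inj freeBT); rewrite vBT0 mul0mx.
apply: trmx_inj; rewrite trmx0; apply: cV_sqnorm_eq0.
by rewrite trmxK trmx_mul trmxK mulmxA -(mulmxA v) vG0 mul0mx mxE.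
Qed.

(* For a full-rank factorization [B C], the pseudo-inverse is [C^+ B^+] with
   [C^+ = C^T (C C^T)^-1] and [B^+ = (B^T B)^-1 B^T]. *)
Lemma full_rank_factor_MP_pinv m n k (B : 'M[R]_(m, k)) (C : 'M[R]_(k, n)) :
  row_free B^T -> row_free C -> exists X, is_MP_pinv (B *m C) X.
Proof.
move=> freeBT freeC.
set G1 := B^T *m B; set G2 := C *m C^T.
have unitG1 : G1 \in unitmx := gram_unitmx freeBT.
have unitG2 : G2 \in unitmx by rewrite /G2 -[C in C *m _]trmxK gram_unitmx ?trmxK.
have symG1 : G1^T = G1 by rewrite /G1 trmx_mul trmxK.
have symG2 : G2^T = G2 by rewrite /G2 trmx_mul trmxK.
have G1K p (Y : 'M[R]_(p, k)) : Y *m invmx G1 *m G1 = Y by rewrite -mulmxA mulVmx ?mulmx1.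
have G2K p (Y : 'M[R]_(p, k)) : Y *m G2 *m invmx G2 = Y by rewrite -mulmxA mulmxV ?mulmx1.
have G2K' p (Y : 'M[R]_(p, k)) : Y *m invmx G2 *m G2 = Y by rewrite -mulmxA mulVmx ?mulmx1.
exists (C^T *m invmx G2 *m invmx G1 *m B^T).
have AX : B *m C *m (C^T *m invmx G2 *m invmx G1 *m B^T) = B *m invmx G1 *m B^T.
  by rewrite !mulmxA -(mulmxA B C) -/G2 G2K.
have XA : C^T *m invmx G2 *m invmx G1 *m B^T *m (B *m C) = C^T *m invmx G2 *m C.
  by rewrite !mulmxA -(mulmxA _ B^T B) -/G1 G1K.
split.
- by rewrite AX !mulmxA -(mulmxA _ B^T B) -/G1 G1K.
- by rewrite XA !mulmxA -(mulmxA _ C C^T) -/G2 G2K'.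
- by rewrite AX !trmx_mul trmxK trmx_inv symG1 mulmxA.
- by rewrite XA !trmx_mul trmxK trmx_inv symG2 mulmxA.
Qed.

Lemma mp_pinvP m n (A : 'M[R]_(m, n)) : is_MP_pinv A (mp_pinv A).
Proof.
apply: xgetPex; rewrite -(mulmx_base A).
apply: full_rank_factor_MP_pinv; last exact: row_base_free.
by rewrite /row_free mxrank_tr; exact: col_base_full.
Qed.

End PseudoInverse.

Lemma ZsetP (R : realType) q r (A : 'M[R]_(q + r)) Z :
  Zset A Z <-> forall u, 0 <= qform A (col_mx u (Z *m u)).
Proof.
split=> AZ u; have := AZ u;
  by rewrite -[_ ord0 ord0]/(qform _ u) qform_mulmx mul_col_mx mul1mx.
Qed.

Lemma mulmx_ker_sub (R : fieldType) m n p k (A : 'M[R]_(m, n)) (B : 'M[R]_(p, n))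
    (D : 'M[R]_(n, k)) :
  (forall v : 'cV_n, A *m v = 0 -> B *m v = 0) -> A *m D = 0 -> B *m D = 0.
Proof.
move=> kerAB AD0.
have BcolD0 j : B *m col j D = 0 by apply: kerAB; rewrite colE mulmxA -colE AD0 col0.
apply/matrixP => i j; have := congr1 (fun X : 'M_(p, 1) => X i ord0) (BcolD0 j).
by rewrite colE mulmxA -colE !mxE.
Qed.

Lemma rV_mul_eq1 (R : realType) n (x : 'cV[R]_n) :
  x != 0 -> exists w : 'rV_n, w *m x = 1%:M.
Proof.
move=> x_neq0; set c := (x^T *m x) ord0 ord0; exists (c^-1 *: x^T).
rewrite -scalemxAl [x^T *m x]mx11_scalar -/c scale_scalar_mx.
by rewrite mulVf ?gt_eqF ?cV_sqnorm_gt0.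
Qed.

Section SchurComplement.
Variables (R : realType) (q r : nat) (N : 'M[R]_(q + r)).
Hypothesis symN : N^T = N.
Hypothesis kerN : forall v : 'cV_r, drsubmx N *m v = 0 -> ursubmx N *m v = 0.

Local Notation N11 := (ulsubmx N).
Local Notation N12 := (ursubmx N).
Local Notation N21 := (dlsubmx N).
Local Notation N22 := (drsubmx N).
Local Notation P := (mp_pinv N22).

Definition schur_gain : 'M[R]_(r, q) := - (P *m N21).
Local Notation K := schur_gain.

Lemma trmx_N12 : N12^T = N21.
Proof. by rewrite trmx_ursub symN. Qed.

Lemma trmx_N21 : N21^T = N12.
Proof. by rewrite -trmx_N12 trmxK. Qed.

Lemma trmx_N22 : N22^T = N22.
Proof. by rewrite trmx_drsub symN. Qed.

Lemma N12_pinvT_N22 : N12 *m P^T *m N22 = N12.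
Proof.
have [N22PN22 _ _ _] := mp_pinvP N22.
have N22PTN22 : N22 *m P^T *m N22 = N22.
  by have := congr1 trmx N22PN22; rewrite !trmx_mul trmx_N22 mulmxA.
have : N12 *m (P^T *m N22 - 1%:M) = 0.
  by apply: mulmx_ker_sub kerN _; rewrite mulmxBr mulmx1 mulmxA N22PTN22 subrr.
by move/eqP; rewrite mulmxBr mulmx1 subr_eq0 mulmxA => /eqP.
Qed.

Lemma qform_schur (a : 'cV_q) (b : 'cV_r) :
  qform N (col_mx a (K *m a + b)) = qform (gschur N) a + qform N22 b.
Proof.
set C := col_mx 1%:M K.
have KT : K^T = - (N12 *m P^T) by rewrite linearN /= trmx_mul trmx_N21.
have CTN : C^T *m N = row_mx (N11 + K^T *m N21) 0.
  rewrite tr_col_mx trmx1 -[N in _ *m N]submxK mul_row_block !mul1mx.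
  by rewrite KT !mulNmx N12_pinvT_N22 addrN.
have cross0 : bform N (C *m a) (col_mx 0 b) = 0.
  rewrite /bform trmx_mul -(mulmxA a^T) CTN -mulmxA mul_row_col mulmx0.
  by rewrite (mul0mx _ b) addr0 mulmx0 mxE.
have -> : col_mx a (K *m a + b) = C *m a + col_mx 0 b.
  by rewrite mul_col_mx mul1mx add_col_mx addr0.
rewrite qformD cross0 (bformC _ _ symN) cross0 !addr0 qform_col0 -qform_mulmx.
rewrite CTN mul_row_col mulmx1 (mul0mx _ K) addr0 KT mulNmx -mulmxA.
rewrite qformBmx /gschur qformBmx -[qform (N12 *m P *m N21) a]qform_tr.
by rewrite !trmx_mul trmx_N12 trmx_N21 mulmxA.
Qed.

Hypothesis psd_N22 : psd_mx (- N22).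
Hypothesis psd_S : psd_mx (gschur N).
Local Notation S := (gschur N).

Lemma qform_N22_le0 (y : 'cV_r) : qform N22 y <= 0.
Proof. by rewrite -oppr_ge0 -qformNmx; apply: psd_N22. Qed.

Lemma Zset_gainD (D : 'M_(r, q)) :
  (forall u, 0 <= qform S u + qform N22 (D *m u)) -> Zset N (K + D).
Proof. by move=> SD_ge0; apply/ZsetP => u; rewrite mulmxDl qform_schur. Qed.

Lemma Zset_gain_rank1 (y : 'cV_r) (w : 'rV_q) :
  (forall u, 0 <= qform S u + (w *m u) ord0 ord0 ^+ 2 * qform N22 y) ->
  Zset N (K + y *m w).
Proof.
move=> Sw_ge0; apply: Zset_gainD => u.
by rewrite -mulmxA [w *m u]mx11_scalar mul_mx_scalar qformZ.
Qed.

Lemma gain_rank1_mulmx (y : 'cV_r) (w : 'rV_q) (x : 'cV_q) :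
  w *m x = 1%:M -> (K + y *m w) *m x = K *m x + y.
Proof. by move=> wx1; rewrite mulmxDl -mulmxA wx1 mulmx1. Qed.

Lemma Zset_graph_ker (x : 'cV_q) (y : 'cV_r) : x != 0 -> N22 *m y = 0 ->
  exists Z, Zset N Z /\ Z *m x = K *m x + y.
Proof.
move=> x_neq0 N22y0; have [w wx1] := rV_mul_eq1 x_neq0.
exists (K + y *m w); split; last exact: gain_rank1_mulmx.
apply: Zset_gain_rank1 => u.
by rewrite (qform_ker N22y0) mulr0 addr0; apply: psd_S.
Qed.

(* [w *m u] is the coefficient of the [S]-orthogonal projection of [u] on [x],
   so [qform S u >= (w *m u)^2 * qform S x] (Cauchy-Schwarz for [S >= 0]). *)
Lemma Zset_graph_pos (x : 'cV_q) (y : 'cV_r) :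
  0 < qform S x -> 0 <= qform S x + qform N22 y ->
  exists Z, Zset N Z /\ Z *m x = K *m x + y.
Proof.
move=> Sx_gt0 Nxy_ge0; set s := qform S x.
have s2_neq0 : 2 * s != 0 by rewrite mulf_neq0 ?pnatr_eq0 ?gt_eqF.
pose w : 'rV_q := (2 * s)^-1 *: (x^T *m (S + S^T)).
have wE u : (w *m u) ord0 ord0 = (2 * s)^-1 * (bform S x u + bform S u x).
  by rewrite -scalemxAl mxE mulmxDr mulmxDl mxE -[bform S u x]bform_tr.
exists (K + y *m w); split; last first.
  apply: gain_rank1_mulmx; rewrite [w *m x]mx11_scalar wE -/(qform S x) -/s.
  by rewrite -mulr2n -[s *+ 2]mulr_natl mulVf.
apply: Zset_gain_rank1 => u; rewrite wE; set t := (2 * s)^-1 * _.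
have tE : bform S x u + bform S u x = 2 * s * t by rewrite /t mulVKf.
have : 0 <= qform S (u + (- t) *: x) := psd_S _.
rewrite qform_lin -/s sqrrN (addrC (bform S u x)) tE => Su_ge0.
have := mulr_ge0 (sqr_ge0 t) Nxy_ge0; rewrite -/s; nra.
Qed.

Lemma qform_gt0_usubmx_neq0 v : 0 < qform N v -> usubmx v != 0.
Proof.
apply: contraTneq => v10; rewrite -leNgt -[v]vsubmxK v10 qform_col0.
exact: qform_N22_le0.
Qed.

Lemma Zset_sub_qform_ge0 (M : 'M[R]_(q + r)) xb : 0 < qform N xb ->
  (forall Z, Zset N Z -> Zset M Z) -> forall v, 0 <= qform N v -> 0 <= qform M v.
Proof.
move=> /qform_gt0_usubmx_neq0 e_neq0 ZNM.
have graph_ge0 x y : (exists Z, Zset N Z /\ Z *m x = K *m x + y) ->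
    0 <= qform M (col_mx x (K *m x + y)).
  by move=> [Z [/ZNM/ZsetP ZMZ <-]].
move=> v; set x := usubmx v; set y := dsubmx v - K *m x.
have -> : v = col_mx x (K *m x + y) by rewrite addrC subrK vsubmxK.
rewrite qform_schur => Nv_ge0.
have : 0 <= qform S x := psd_S x.
rewrite le_eqVlt => /orP[/eqP/esym Sx0|Sx_gt0]; last exact/graph_ge0/Zset_graph_pos.
move: Nv_ge0; rewrite Sx0 add0r => N22y_ge0.
have N22y0 : N22 *m y = 0.
  have : (- N22) *m y = 0.
    apply: psd_qform_eq0_ker => //; first by rewrite linearN /= trmx_N22.
    by rewrite qformNmx; apply/eqP; rewrite oppr_eq0 eq_le N22y_ge0 qform_N22_le0.
  by rewrite mulNmx => /eqP; rewrite oppr_eq0 => /eqP.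
have [->|x_neq0] := eqVneq x 0; last exact/graph_ge0/Zset_graph_ker.
(* No graph of a [Z] passes through [(0, y)]; its value is instead the leading
   coefficient of [t |-> qform M (e, K e + t y)]. *)
rewrite mulmx0 add0r.
set e := usubmx xb in e_neq0.
set p := col_mx e (K *m e).
apply: (@quadratic_ge0_lead_ge0 _ (qform M p) (bform M p (col_mx 0 y) + bform M (col_mx 0 y) p)).
move=> t; rewrite -qform_lin.
have := graph_ge0 e (t *: y) (Zset_graph_ker e_neq0 _).
rewrite -scalemxAr N22y0 scaler0 => /(_ erefl).
by rewrite scale_col_mx scaler0 add_col_mx addr0.
Qed.

End SchurComplement.

Lemma Zset_sub_of_psd (R : realType) q r (M N : 'M[R]_(q + r)) :
  (exists alpha, 0 <= alpha /\ psd_mx (M - alpha *: N)) ->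
  forall Z, Zset N Z -> Zset M Z.
Proof.
move=> [a [a_ge0 psdMaN]] Z /ZsetP ZN; apply/ZsetP => u.
have : 0 <= qform (M - a *: N) (col_mx u (Z *m u)) := psdMaN _.
by rewrite qformBmx qformZmx subr_ge0; apply: le_trans; apply: mulr_ge0.
Qed.

Lemma eigenvalue_gt0_qform_gt0 (R : realType) n (A : 'M[R]_n) l :
  0 < l -> eigenvalue A l -> exists x, 0 < qform A x.
Proof.
move=> l_gt0 /eigenvalueP [v Av v_neq0]; exists v^T.
rewrite /qform /bform trmxK Av -scalemxAl mxE mulr_gt0 // -[v in v *m _]trmxK.
by rewrite cV_sqnorm_gt0 // -(inj_eq trmx_inj) trmxK trmx0.
Qed.

Unset Implicit Arguments.

Theorem mainTheorem8 (R : realType) (q r : nat) (M N : 'M[R]_(q + r)) :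
  sym_mx M -> sym_mx N ->
  ((exists alpha : R, 0 <= alpha /\ psd_mx (M - alpha *: N)) ->
     forall Z : 'M[R]_(r, q), Zset N Z -> Zset M Z) /\
  (Pi_set N -> (exists lambda : R, 0 < lambda /\ eigenvalue N lambda) ->
     ((forall Z : 'M[R]_(r, q), Zset N Z -> Zset M Z) <->
      (exists alpha : R, 0 <= alpha /\ psd_mx (M - alpha *: N)))).
Proof.
move=> _ symN; split; first exact: Zset_sub_of_psd.
move=> [_ psd_N22 psd_S kerN] [l [/eigenvalue_gt0_qform_gt0 Npos /Npos [xb Nxb_gt0]]].
split; last exact: Zset_sub_of_psd.
move=> ZNM; apply: (S_lemma _ Nxb_gt0).
exact: Zset_sub_qform_ge0 symN kerN psd_N22 psd_S _ _ Nxb_gt0 ZNM.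
Qed.
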